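(* Let $r$, $s$, $c$, $d$ and $a_n$ be any integers with $r\neq0$ and $r+d\neq0$, let $n$ be a positive integer, and assume $U_d$, $U_r$, $U_{r+d}$ are nonzero. Then \[ \begin{split} &\sum_{a_{n-1}=c}^{a_n}\sum_{a_{n-2}=c}^{a_{n-1}}\cdots\sum_{a_0=c}^{a_1}\left(\frac{U_d}{U_{r+d}}\right)^{a_0}W_{ra_0+s} =\frac{(-1)^nU_d^{n+a_n}}{q^{dn}U_r^nU_{r+d}^{a_n}}W_{(r+d)n+ra_n+s}\\ &\qquad-\left(\frac{U_d}{U_{r+d}}\right)^{c-1}\sum_{j=0}^{n-1}\frac{(-1)^{n-j}}{q^{d(n-j)}}\left(\frac{U_d}{U_r}\right)^{n-j}W_{r(n-j+c-1)+d(n-j)+s}\binom{a_n+j-c}{j}. \end{split} \]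
   Context: Let $a,b,p,q$ be complex numbers with $p\neq0$, $q\neq0$. The Horadam sequence $W_j=W_j(a,b;p,q)$ is defined by $W_0=a$, $W_1=b$, $W_j=pW_{j-1}-qW_{j-2}$ for $j\ge2$, and extended to negative indices by $W_{-m}=(pW_{-m+1}-W_{-m+2})/q$, so the recurrence holds for all integers. $U_j=W_j(0,1;p,q)$ is the Lucas sequence of the first kind. For integers $c,m$ and a function $f$ on the integers, $\sum_{k=c}^m f(k)$ denotes the usual sum if $m\ge c$, equals $0$ if $m=c-1$, and equals $-\sum_{k=m+1}^{c-1}f(k)$ if $m\le c-2$. The nested sum $\sum_{a_{n-1}=c}^{a_n}\cdots\sum_{a_0=c}^{a_1}g(a_0)$ is the iterated sum with $n$ summation signs: innermost over $a_0$ from $c$ to $a_1$, then $a_1$ from $c$ to $a_2$, ..., outermost $a_{n-1}$ from $c$ to $a_n$. For an integer $j\ge0$ and any number $y$, $\binom{y}{j}=y(y-1)\cdots(y-j+1)/j!$. *)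

(* Complex numbers are modelled as R[i] (mathcomp-real-closed
   `complex`) for an arbitrary R : realType; the auxiliary definitions below
   are stated over an arbitrary field F. *)
From mathcomp Require Import all_boot all_order all_algebra.
From mathcomp Require Export reals complex.
Set Implicit Arguments. Unset Strict Implicit. Unset Printing Implicit Defensive.
Import Order.TTheory GRing.Theory Num.Theory.
Local Open Scope ring_scope.

Section Defs.
Variable F : fieldType.

(* forward step (W_j, W_{j+1}) |-> (W_{j+1}, W_{j+2}) *)
Definition hfwd (p q : F) (x : F * F) : F * F := (x.2, p * x.2 - q * x.1).
Definition hbwd (p q : F) (x : F * F) : F * F := ((p * x.1 - x.2) / q, x.1).

Definition horadam (a b p q : F) (j : int) : F :=
  match j with
  | Posz n => (iter n (hfwd p q) (a, b)).1
  | Negz n => (iter n.+1 (hbwd p q) (a, b)).1   (* index -(n+1) *)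
  end.

Definition lucasU (p q : F) (j : int) : F := horadam 0 1 p q j.

(* generalized sum \sum_{k=c}^m f k with the paper's convention for m < c *)
Definition gsum (c m : int) (f : int -> F) : F :=
  if (c <= m)%R then \sum_(i < absz (m - c + 1)%R) f (c + i%:Z)
  else - \sum_(i < absz (c - 1 - m)%R) f (m + 1 + i%:Z).

(* nested sum with n summation signs, innermost variable a_0, outer bound m *)
Fixpoint nested (n : nat) (c : int) (g : int -> F) : int -> F :=
  match n with
  | 0 => g
  | n'.+1 => fun m => gsum c m (nested n' c g)
  end.

Definition gbinom (y : F) (j : nat) : F :=
  (\prod_(i < j) (y - i%:R)) / (j`!)%:R.
End Defs.

(** Let Phi_n(m) be the right-hand side with a_n replaced by m, and x = U_d/U_{r+d}.
    The nested sum N_n satisfies N_0(m) = x^m W_{rm+s} and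
    N_{n+1}(m) = sum_{k=c}^m N_n(k), so it suffices that Phi_0(m) = x^m W_{rm+s},
    Phi_{n+1}(m) - Phi_{n+1}(m-1) = Phi_n(m) and Phi_{n+1}(c-1) = 0: the
    generalized sum of such differences telescopes, whatever the order of c and m.
    The difference identity comes, for the leading term, from
    U_{r+d} W_{t+d} - U_d W_{t+r+d} = q^d U_r W_t (the case of
    U_m W_{t+n} - U_n W_{t+m} = q^n U_{m-n} W_t with m = r+d, n = d) and, for the
    tail, from Pascal's rule binom(y, j+1) = binom(y-1, j+1) + binom(y-1, j);
    the vanishing at c-1 holds because binom(j-1, j) = 0 for j >= 1. *)

From mathcomp Require Import all_boot all_order all_algebra.
From mathcomp Require Import reals complex.
From mathcomp Require Import ring zify.
Set Implicit Arguments. Unset Strict Implicit. Unset Printing Implicit Defensive.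
Import Order.TTheory GRing.Theory Num.Theory.
Local Open Scope ring_scope.

Lemma int_ind_from (k : int) (P : int -> Prop) :
  P k -> (forall j, P j -> P (j + 1)) -> (forall j, P (j + 1) -> P j) ->
  forall j, P j.
Proof.
move=> Pk PS PP j; rewrite -(subrK k j).
elim/int_ind: (j - k) => [|n IH|n IH]; first by rewrite add0r.
- by rewrite -addn1 PoszD addrAC; apply: PS.
- by apply: PP; rewrite -addn1 PoszD opprD addrAC subrK.
Qed.

Section HoradamRecurrence.
Variables (F : fieldType) (p q : F).
Hypothesis q_neq0 : q != 0.

Definition horadam_recurrence (f : int -> F) :=
  forall j : int, f (j + 2) = p * f (j + 1) - q * f j.

Definition horadam_state (a b : F) (j : int) : F * F :=
  match j with
  | Posz n => iter n (hfwd p q) (a, b)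
  | Negz n => iter n.+1 (hbwd p q) (a, b)
  end.

Lemma hfwdK : cancel (hbwd p q) (hfwd p q).
Proof. by case=> x1 x2; rewrite /hfwd /hbwd /=; congr pair; field. Qed.

Lemma horadam_stateS a b j :
  horadam_state a b (j + 1) = hfwd p q (horadam_state a b j).
Proof.
case: j => [n|[|n]]; first by rewrite -PoszD addn1.
- by rewrite /= hfwdK.
- have -> : Negz n.+1 + 1 = Negz n by rewrite !NegzE -addn1 PoszD; ring.
  by rewrite /= hfwdK.
Qed.

Lemma horadam_rec a b : horadam_recurrence (horadam a b p q).
Proof.
have state1 j : horadam a b p q j = (horadam_state a b j).1 by case: j.
by move=> j; rewrite !state1 -[2]/(1 + 1) addrA !horadam_stateS.
Qed.

Lemma lucasU_rec : horadam_recurrence (lucasU p q).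
Proof. exact: horadam_rec. Qed.

Lemma horadam_recurrence_eq f g k :
  horadam_recurrence f -> horadam_recurrence g ->
  f k = g k -> f (k + 1) = g (k + 1) -> forall j, f j = g j.
Proof.
move=> recf recg eqk eqk1 j.
suff [] : f j = g j /\ f (j + 1) = g (j + 1) by [].
elim/(@int_ind_from k): j => [//|i [e0 e1]|i [e1 e2]].
- by split=> //; rewrite -addrA recf recg e0 e1.
- split=> //; apply: (mulfI q_neq0).
  have {}e2 : f (i + 2) = g (i + 2) by rewrite -addrA in e2.
  have qf : q * f i = p * f (i + 1) - f (i + 2) by rewrite recf; ring.
  have qg : q * g i = p * g (i + 1) - g (i + 2) by rewrite recg; ring.
  by rewrite qf qg e1 e2.
Qed.

Variables a b : F.
Local Notation W := (horadam a b p q).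
Local Notation U := (lucasU p q).

Lemma lucasU_horadam_det (t n : int) :
  U (n + 1) * W (t + n) - U n * W (t + n + 1) = q ^ n * W t.
Proof.
pose D k := U (k + 1) * W (t + k) - U k * W (t + k + 1).
have D_succ k : D (k + 1) = q * D k.
  rewrite /D -!addrA [1 + 1]/2 addrA lucasU_rec addrA horadam_rec; ring.
change (D n = q ^ n * W t); elim/(@int_ind_from 0): n => [|j IH|j].
- by rewrite /D add0r addr0 expr0z [U 1]/= [U 0]/=; ring.
- by rewrite D_succ IH expfzDr // expr1z; ring.
- by rewrite D_succ expfzDr // expr1z mulrC mulrAC => /(mulIf q_neq0).
Qed.

Lemma lucasU_horadam_cross (m n t : int) :
  U m * W (t + n) - U n * W (t + m) = q ^ n * U (m - n) * W t.
Proof.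
move: m; apply: (horadam_recurrence_eq (k := n)
  (f := fun m : int => U m * W (t + n) - U n * W (t + m))
  (g := fun m : int => q ^ n * U (m - n) * W t)).
- move=> m /=; rewrite (lucasU_rec m) [t + (m + 2)]addrA (horadam_rec a b (t + m)).
  by rewrite !addrA; ring.
- move=> m /=; rewrite [m + 2 - n]addrAC [m + 1 - n]addrAC (lucasU_rec (m - n)).
  ring.
- by rewrite !subrr [U 0]/=; ring.
- by rewrite /= addrAC subrr add0r [U 1]/= mulr1 addrA lucasU_horadam_det.
Qed.

End HoradamRecurrence.

Section GeneralizedSums.
Variable F : fieldType.

Lemma sumr_int_telescope (f : int -> F) (k : int) (N : nat) :
  \sum_(i < N) (f (k + i.+1%:Z) - f (k + i%:Z)) = f (k + N%:Z) - f k.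
Proof.
rewrite -(big_mkord xpredT (fun i => f (k + i.+1%:Z) - f (k + i%:Z))).
by rewrite (telescope_sumr (fun i => f (k + i%:Z))) // addr0.
Qed.

Lemma eq_gsum c m (f g : int -> F) : f =1 g -> gsum c m f = gsum c m g.
Proof.
by move=> efg; rewrite /gsum; case: ifP => _; [|congr (- _)];
  apply: eq_bigr => i _; rewrite efg.
Qed.

Lemma gsum_telescope c m (G : int -> F) :
  gsum c m (fun k => G k - G (k - 1)) = G m - G (c - 1).
Proof.
rewrite /gsum; case: ifP => cm.
- have eN : (absz (m - c + 1)%R)%:Z = m - c + 1 by rewrite gez0_abs; lia.
  rewrite (eq_bigr (fun i : 'I__ => G (c - 1 + i.+1%:Z) - G (c - 1 + i%:Z))).
    by rewrite sumr_int_telescope eN; congr (G _ - _); ring.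
  by move=> i _; rewrite -addn1 PoszD; congr (G _ - G _); ring.
- have eN : (absz (c - 1 - m)%R)%:Z = c - 1 - m by rewrite gez0_abs; lia.
  rewrite (eq_bigr (fun i : 'I__ => G (m + i.+1%:Z) - G (m + i%:Z))).
    by rewrite sumr_int_telescope eN opprB; congr (_ - G _); ring.
  by move=> i _; rewrite -addn1 PoszD; congr (G _ - G _); ring.
Qed.

Lemma nested_telescope c (g : int -> F) (Phi : nat -> int -> F) :
  (forall m, Phi 0%N m = g m) ->
  (forall n m, Phi n.+1 m - Phi n.+1 (m - 1) = Phi n m) ->
  (forall n, Phi n.+1 (c - 1) = 0) ->
  forall n m, nested n c g m = Phi n m.
Proof.
move=> Phi0 PhiS Phi_c n; elim: n => [|n IH] m /=; first by rewrite Phi0.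
rewrite (@eq_gsum c m _ (fun k => Phi n.+1 k - Phi n.+1 (k - 1))).
  by rewrite gsum_telescope Phi_c subr0.
by move=> k; rewrite PhiS IH.
Qed.

Lemma gbinom0 y : gbinom y 0 = 1 :> F.
Proof. by rewrite /gbinom big_ord0 fact0 divr1. Qed.

Lemma gbinom_nat_small (i j : nat) : (i < j)%N -> gbinom (i%:R : F) j = 0.
Proof. by move=> lt_ij; rewrite /gbinom (bigD1 (Ordinal lt_ij)) //= subrr !mul0r. Qed.

End GeneralizedSums.

Lemma gbinomS (F : numFieldType) (y : F) j :
  gbinom y j.+1 = gbinom (y - 1) j.+1 + gbinom (y - 1) j.
Proof.
rewrite /gbinom big_ord_recl big_ord_recr /=.
set P := \prod_(i < j) (y - 1 - i%:R).
have -> : \prod_(i < j) (y - (bump 0 i)%:R) = P.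
  by apply: eq_bigr => i _; rewrite /bump /= add1n -addn1 natrD; ring.
have fact_neq0 : (j`!)%:R != 0 :> F by rewrite pnatr_eq0 -lt0n fact_gt0.
have jS_neq0 : (j.+1)%:R != 0 :> F by rewrite pnatr_eq0.
rewrite factS natrM; rewrite -addn1 natrD in jS_neq0 *.
by field; rewrite fact_neq0 jS_neq0.
Qed.

Section ClosedForm.
Variables (F : numFieldType) (a b p q : F) (r s c d : int).
Local Notation W := (horadam a b p q).
Local Notation U := (lucasU p q).

Definition lead_term (n : nat) (m : int) : F :=
  (-1) ^+ n * U d ^ (n%:Z + m) / (q ^ (d * n%:Z) * U r ^+ n * U (r + d) ^ m)
    * W ((r + d) * n%:Z + r * m + s).

Definition tail_coef (k : nat) : F :=
  (-1) ^+ k / q ^ (d * k%:Z) * (U d / U r) ^+ k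
    * W (r * (k%:Z + c - 1) + d * k%:Z + s).

Definition closed_form (n : nat) (m : int) : F :=
  lead_term n m - (U d / U (r + d)) ^ (c - 1) *
    \sum_(j < n) (tail_coef (n - j) * gbinom ((m + j%:Z - c)%:~R) j).

Hypotheses (q_neq0 : q != 0) (Ud_neq0 : U d != 0) (Ur_neq0 : U r != 0)
  (Urd_neq0 : U (r + d) != 0).

Lemma closed_form0 m : closed_form 0 m = (U d / U (r + d)) ^ m * W (r * m + s).
Proof.
rewrite /closed_form big_ord0 mulr0 subr0 /lead_term !mulr0 !add0r.
by rewrite expr0z !expr0 expfzMl -expfV !mul1r.
Qed.

Lemma lead_termS_sub n m : lead_term n.+1 m - lead_term n.+1 (m - 1) = lead_term n m.
Proof.
have cross (t : int) : U (r + d) * W (t + d) - U d * W (t + (r + d)) = q ^ d * U r * W t.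
  by rewrite lucasU_horadam_cross // addrK.
rewrite /lead_term -addn1 PoszD.
set t := (r + d) * n%:Z + r * m + s.
have -> : (r + d) * (n%:Z + 1) + r * m + s = t + (r + d) by rewrite /t; ring.
have -> : (r + d) * (n%:Z + 1) + r * (m - 1) + s = t + d by rewrite /t; ring.
have -> : n%:Z + 1 + m = n%:Z + m + 1 by ring.
have -> : n%:Z + 1 + (m - 1) = n%:Z + m by ring.
have -> : W (t + (r + d)) = (U (r + d) * W (t + d) - q ^ d * U r * W t) / U d.
  by rewrite -cross; field.
rewrite mulrDr mulr1 !expfzDr // exprN1 !expr1z addn1 !exprS.
by field; rewrite !expfz_neq0 // expf_neq0 // Urd_neq0 Ur_neq0 Ud_neq0.
Qed.

Lemma closed_formS_sub n m :
  closed_form n.+1 m - closed_form n.+1 (m - 1) = closed_form n m.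
Proof.
rewrite /closed_form !big_ord_recl /= subn0 !gbinom0.
have <- : \sum_(i < n) tail_coef (n - i) * gbinom ((m + i.+1%:Z - c)%:~R) i.+1
    - \sum_(i < n) tail_coef (n - i) * gbinom ((m - 1 + i.+1%:Z - c)%:~R) i.+1
    = \sum_(i < n) tail_coef (n - i) * gbinom ((m + i%:Z - c)%:~R) i.
  rewrite -sumrB; apply: eq_bigr => i _; rewrite -mulrBr.
  have -> : m - 1 + i.+1%:Z - c = (m + i.+1%:Z - c) - 1 by ring.
  have -> : m + i%:Z - c = (m + i.+1%:Z - c) - 1 by rewrite -addn1 PoszD; ring.
  by rewrite !intrB gbinomS addrAC subrr add0r.
by rewrite -(lead_termS_sub n m); ring.
Qed.

Lemma closed_formS_at_pred n : closed_form n.+1 (c - 1) = 0.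
Proof.
rewrite /closed_form big_ord_recl big1 => [|i _]; last first.
  have -> : c - 1 + i.+1%:Z - c = i%:Z by rewrite -addn1 PoszD; ring.
  by rewrite gbinom_nat_small ?mulr0.
rewrite addr0 subn0 gbinom0 mulr1 /lead_term /tail_coef.
have -> : r * (n.+1%:Z + c - 1) + d * n.+1%:Z + s = (r + d) * n.+1%:Z + r * (c - 1) + s.
  by ring.
rewrite expfzDr // -exprnP expfzMl -expfV expr_div_n.
by field; rewrite expf_neq0 // !expfz_neq0.
Qed.
End ClosedForm.

Theorem theorem5 (R : realType) (a b p q : R[i]) (r s c d an : int) (n : nat) :
  p != 0 -> q != 0 -> r != 0 -> r + d != 0 -> (0 < n)%N ->
  lucasU p q d != 0 -> lucasU p q r != 0 -> lucasU p q (r + d) != 0 ->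
  let W := horadam a b p q in
  let U := lucasU p q in
  nested n c (fun a0 => (U d / U (r + d)) ^ a0 * W (r * a0 + s)) an =
    (-1) ^+ n * U d ^ (n%:Z + an) / (q ^ (d * n%:Z) * U r ^+ n * U (r + d) ^ an)
      * W ((r + d) * n%:Z + r * an + s)
    - (U d / U (r + d)) ^ (c - 1) *
      \sum_(j < n)
        ((-1) ^+ (n - j) / q ^ (d * (n - j)%N%:Z) * (U d / U r) ^+ (n - j)
         * W (r * ((n - j)%N%:Z + c - 1) + d * (n - j)%N%:Z + s)
         * gbinom ((an + j%:Z - c)%:~R) j).
Proof.
move=> _ q_neq0 _ _ _ Ud_neq0 Ur_neq0 Urd_neq0 W U.
apply: (nested_telescope (Phi := closed_form a b p q r s c d)).
- exact: closed_form0.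
- exact: closed_formS_sub.
- exact: closed_formS_at_pred.
Qed.
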